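(* Let $p\in\mathbb{R}[x_1,x_2]_{2d}$ (not necessarily a sum of squares). For every $\mathbf{u}=(u_1,u_2)\in\mathbb{R}[x_1,x_2]_d^2$ with $\nabla f_p(\mathbf{u})=0$ and $\nabla^2 f_p(\mathbf{u})\succeq0$, the form $u_1^2+u_2^2$ is the projection of $p$ onto the cone $\Sigma[x_1,x_2]_{2d}$ with respect to the inner product defining $f_p$; that is, $f_p(\mathbf{u})=\|u_1^2+u_2^2-p\|^2\le\|q-p\|^2$ for all $q\in\Sigma[x_1,x_2]_{2d}$.
   Context: $\mathbb{R}[x_1,x_2]_n$ denotes the space of real binary forms (homogeneous polynomials in $x_1,x_2$) of degree $n$, and $\Sigma[x_1,x_2]_{2d}$ the cone of sums of squares of binary forms of degree $d$. Fix any inner product $\langle\cdot,\cdot\rangle$ on $\mathbb{R}[x_1,x_2]_{2d}$ with norm $\|\cdot\|$, and let $f_p(\mathbf{u})=\|u_1^2+u_2^2-p\|^2$ on $\mathbb{R}[x_1,x_2]_d^2$; derivatives are with respect to this finite-dimensional real vector space ($\nabla f_p(\mathbf{u})=0$: all first directional derivatives vanish; $\nabla^2 f_p(\mathbf{u})\succeq0$: all second directional derivatives are nonnegative). *)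

From HB Require Import structures.
From mathcomp Require Import all_boot all_order all_algebra.
From mathcomp Require Import all_classical all_reals all_analysis.
Set Implicit Arguments. Unset Strict Implicit. Unset Printing Implicit Defensive.
Import Order.TTheory GRing.Theory Num.Theory.
Local Open Scope ring_scope.

(* A real binary form of degree n is represented by its coefficient row
   vector c : 'rV_(n.+1), standing for  \sum_(k <= n) c_k x1^k x2^(n-k). *)
Definition bform (R : realType) (n : nat) := 'rV[R]_(n.+1).

Definition bfmul (R : realType) (d e : nat) (u : bform R d) (v : bform R e)
  : bform R (d + e) :=
  \row_(k < (d + e).+1)
     \sum_(i < d.+1) \sum_(j < e.+1 | (i + j == k)%N) u 0 i * v 0 j.

Definition is_sos (R : realType) (d : nat) (q : bform R (d + d)) : Prop :=
  exists (m : nat) (g : 'I_m -> bform R d), q = \sum_(i < m) bfmul (g i) (g i).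

Definition is_inner_product (R : realType) (V : lmodType R) (ip : V -> V -> R)
  : Prop :=
  [/\ (forall x y, ip x y = ip y x),
      (forall (a : R) (x y z : V), ip (a *: x + y) z = a * ip x z + ip y z)
    & (forall x, x != 0 -> 0 < ip x x)].

Definition ipnorm (R : realType) (V : lmodType R) (ip : V -> V -> R) (x : V) : R :=
  Num.sqrt (ip x x).

Definition f_p (R : realType) (d : nat) (ip : bform R (d + d) -> bform R (d + d) -> R)
  (p : bform R (d + d)) (u1 u2 : bform R d) : R :=
  ipnorm ip (bfmul u1 u1 + bfmul u2 u2 - p) ^+ 2.

From HB Require Import structures.
From mathcomp Require Import all_boot all_order all_algebra.
From mathcomp Require Import all_classical all_reals all_analysis.
From mathcomp Require Import ring lra zify.
Set Implicit Arguments. Unset Strict Implicit. Unset Printing Implicit Defensive.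
Import Order.TTheory GRing.Theory Num.Theory.
Local Open Scope ring_scope.

(* Put s = u1^2 + u2^2, r = s - p and L f = <f, r>.  Along the line u + t v,
   f_p is a quartic in t whose first two derivatives at 0 are
   4 L(u1 v1 + u2 v2) and 2 (4 |u1 v1 + u2 v2|^2 + 2 L(v1^2 + v2^2)).  Hence
   L vanishes on every u1 z1 + u2 z2, is nonnegative on v1^2 + v2^2 for every
   syzygy u1 v1 + u2 v2 = 0, and, by polarisation, kills v1 z1 + v2 z2 as soon
   as it kills v1^2 + v2^2.

   These conditions force L(g^2) >= 0 for every form g of degree d.  After a
   linear change of variables making u1 of full degree, dehomogenise and write
   u_i = y_i G with y1, y2 coprime.  By Sylvester, the combinations
   u1 z1 + u2 z2 cover all multiples of G of degree <= 2d, so L factors through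
   reduction modulo G.  With m = y1^2 + y2^2, the syzygies (y2 w, -y1 w) show
   that the quadratic form w |-> L(m w^2) on the quotient is positive
   semidefinite with radical inside that of (w, x) |-> L(w x).  Hence every
   functional x |-> L(g x) is x |-> L(m w x) for some w, and
   L(g^2) = L(m (y1 w)^2) + L(m (y2 w)^2) >= 0.

   Finally L(s) = 0 and L(q) >= 0 for a sum of squares q, so
   |q - p|^2 = |q - s|^2 + 2 L(q - s) + |r|^2 >= |r|^2. *)

Lemma size_mul_leq_add (R : nzRingType) (p q : {poly R}) (a b : nat) :
  (size p <= a.+1)%N -> (size q <= b.+1)%N -> (size (p * q)%R <= (a + b).+1)%N.
Proof. by move=> hp hq; have := size_polyMleq p q; lia. Qed.

Lemma rVpoly_sum (R : nzRingType) n (c : 'rV[R]_n) :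
  rVpoly c = \sum_(i < n) c 0 i *: 'X^i.
Proof.
rewrite {1}[c]row_sum_delta linear_sum; apply: eq_bigr => i _.
by rewrite linearZ /=; congr (_ *: _); apply: rVpoly_delta.
Qed.

Lemma poly_nonroot (R : numDomainType) (p : {poly R}) : p != 0 -> exists x, ~~ root p x.
Proof.
move=> p_neq0; apply/not_existsP => allroot.
have roots : all (root p) [seq i%:R : R | i <- iota 0 (size p)].
  by apply/allP => x _; apply/negPn/negP; apply: allroot.
suff /(max_poly_roots p_neq0 roots) : uniq [seq i%:R : R | i <- iota 0 (size p)].
  by rewrite size_map size_iota ltnn.
by rewrite map_inj_uniq ?iota_uniq // => i j /eqP; rewrite eqr_nat => /eqP.
Qed.

Lemma coprimep_span (F : fieldType) (y1 y2 : {poly F}) (d e : nat) :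
  coprimep y1 y2 -> size y1 = e.+1 -> (size y2 <= e.+1)%N -> (e <= d)%N ->
  forall q : {poly F}, (size q <= (d + e).+1)%N ->
  exists z1 z2 : {poly F},
    [/\ (size z1 <= d.+1)%N, (size z2 <= d.+1)%N & q = y1 * z1 + y2 * z2].
Proof.
move=> /Bezout_eq1_coprimepP [[s t] /= bezout] sy1 sy2 ed q sq.
have y1_neq0 : y1 != 0 by rewrite -size_poly_eq0 sy1.
pose z2 := (t * q) %% y1; pose z1 := s * q + (t * q) %/ y1 * y2.
have qE : q = y1 * z1 + y2 * z2.
  transitivity ((s * y1 + t * y2) * q); first by rewrite bezout mul1r.
  by rewrite mulrDl [t * y2]mulrC -(mulrA y2) {1}(divp_eq (t * q) y1) /z1 /z2; ring.
have sz2 : (size z2 <= e)%N by have := ltn_modpN0 (t * q) y1_neq0; rewrite sy1.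
exists z1, z2; split=> //; last by apply: leq_trans sz2 _; lia.
have : (size (y1 * z1)%R <= (d + e).+1)%N.
  rewrite -[y1 * z1]addr0 -(subrr (y2 * z2)) addrA -qE.
  apply: leq_trans (size_polyD _ _) _; rewrite geq_max sq size_polyN.
  by apply: leq_trans (size_mul_leq_add sy2 (_ : size z2 <= e.-1.+1)%N) _; lia.
have [->|z1_neq0] := eqVneq z1 0; first by rewrite size_poly0.
by rewrite size_mul // sy1; case: (size z1) => //= n; lia.
Qed.

Lemma symmx_ker_sub_range (F : fieldType) n (A B : 'M[F]_n) :
  A^T = A -> B^T = B -> (forall c : 'rV_n, c *m A = 0 -> c *m B = 0) ->
  forall b : 'rV_n, exists c : 'rV_n, b *m B = c *m A.
Proof.
move=> symA symB kerAB b.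
have cokerB : B *m cokermx A = 0.
  have cokerA : (cokermx A)^T *m A = 0.
    by rewrite -[X in _ *m X]symA -trmx_mul mulmx_coker trmx0.
  have : (cokermx A)^T *m B = 0.
    apply/row_matrixP => i; rewrite row_mul row0 kerAB //.
    by rewrite -row_mul cokerA row0.
  by move/(congr1 trmx); rewrite trmx_mul symB trmxK trmx0.
have : (b *m B <= A)%MS by rewrite submxE -mulmxA cokerB mulmx0.
by case/submxP => c ->; exists c.
Qed.

Section FunctionalSqrGe0.
Variables (R : realFieldType) (d : nat) (u1 u2 : {poly R}) (L : {poly R} -> R).
Hypotheses (L_add : {morph L : x y / x + y}) (L_scale : forall c x, L (c *: x) = c * L x).
Hypotheses (size_u1 : size u1 = d.+1) (size_u2 : (size u2 <= d.+1)%N).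
Hypothesis L_ideal : forall z1 z2 : {poly R},
  (size z1 <= d.+1)%N -> (size z2 <= d.+1)%N -> L (u1 * z1 + u2 * z2) = 0.
Hypothesis L_syz_ge0 : forall v1 v2 : {poly R},
  (size v1 <= d.+1)%N -> (size v2 <= d.+1)%N ->
  u1 * v1 + u2 * v2 = 0 -> 0 <= L (v1 * v1 + v2 * v2).
Hypothesis L_syz_radical : forall v1 v2 : {poly R},
  (size v1 <= d.+1)%N -> (size v2 <= d.+1)%N ->
  u1 * v1 + u2 * v2 = 0 -> L (v1 * v1 + v2 * v2) = 0 ->
  forall z1 z2 : {poly R}, (size z1 <= d.+1)%N -> (size z2 <= d.+1)%N ->
  L (v1 * z1 + v2 * z2) = 0.

Section CommonFactor.
Variables (e k : nat) (y1 y2 G : {poly R}).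
Hypotheses (y_coprime : coprimep y1 y2) (size_y1 : size y1 = e.+1)
  (size_y2 : (size y2 <= e.+1)%N) (size_G : size G = k.+1).
Hypotheses (u1E : u1 = y1 * G) (u2E : u2 = y2 * G).

Let G_neq0 : G != 0. Proof. by rewrite -size_poly_eq0 size_G. Qed.

Let d_eq : d = (e + k)%N.
Proof.
have y1_neq0 : y1 != 0 by rewrite -size_poly_eq0 size_y1.
by move: size_u1; rewrite u1E size_mul // size_y1 size_G; lia.
Qed.

Let size_modG (x : {poly R}) : (size (x %% G)%R <= k)%N.
Proof. by have := ltn_modpN0 x G_neq0; rewrite size_G. Qed.

Let e_le_d : (e <= d)%N. Proof. by lia. Qed.

Let L_mulG (q : {poly R}) : (size q <= (d + e).+1)%N -> L (q * G) = 0.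
Proof.
move=> sq; have [z1 [z2 [sz1 sz2 ->]]] :=
  coprimep_span y_coprime size_y1 size_y2 e_le_d sq.
have -> : (y1 * z1 + y2 * z2) * G = u1 * z1 + u2 * z2 by rewrite u1E u2E; ring.
exact: L_ideal _ _ sz1 sz2.
Qed.

Let Lmod f := L (f %% G).

Let LmodE (f : {poly R}) : (size f <= (d + d).+1)%N -> Lmod f = L f.
Proof.
move=> sf; rewrite /Lmod {2}(divp_eq f G) L_add L_mulG ?add0r //.
by rewrite size_divp // size_G leq_subLR; apply: leq_trans sf _; lia.
Qed.

Let Lmod_add : {morph Lmod : x y / x + y}.
Proof. by move=> x y; rewrite /Lmod modpD L_add. Qed.

Let Lmod_scale c x : Lmod (c *: x) = c * Lmod x.
Proof. by rewrite /Lmod modpZl L_scale. Qed.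

Let Lmod_sum (I : finType) (F : I -> {poly R}) :
  Lmod (\sum_i F i) = \sum_i Lmod (F i).
Proof.
have Lmod0 : Lmod 0 = 0 by rewrite -(scale0r 0) Lmod_scale mul0r.
exact: (big_morph Lmod Lmod_add Lmod0).
Qed.

Let Lmod_mulr x y : Lmod (x * y) = Lmod (x * (y %% G)).
Proof. by rewrite /Lmod modp_mul. Qed.

Let Lmod_mull x y : Lmod (x * y) = Lmod ((x %% G) * y).
Proof. by rewrite mulrC Lmod_mulr mulrC. Qed.

Let Lmod_sqr_mod x y : Lmod (y * (x * x)) = Lmod (y * ((x %% G) * (x %% G))).
Proof. by rewrite mulrA Lmod_mulr mulrAC [LHS]Lmod_mulr -mulrA. Qed.

Let m := y1 * y1 + y2 * y2.

Let size_syz (w : {poly R}) : (size w <= k)%N ->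
  (size (y1 * w)%R <= d.+1)%N /\ (size (y2 * w)%R <= d.+1)%N.
Proof.
move=> sw; have sw' : (size w <= k.-1.+1)%N by apply: leq_trans sw _; lia.
split; [apply: leq_trans (size_mul_leq_add (eq_leq size_y1) sw') _ |
        apply: leq_trans (size_mul_leq_add size_y2 sw') _]; lia.
Qed.

Let syzygy w : u1 * (y2 * w) + u2 * - (y1 * w) = 0.
Proof. by rewrite u1E u2E; ring. Qed.

Let Lmod_m_sqr (w : {poly R}) : (size w <= k)%N ->
  Lmod (m * (w * w)) = L (y2 * w * (y2 * w) + - (y1 * w) * - (y1 * w)).
Proof.
move=> sw; have [sy1w sy2w] := size_syz sw.
rewrite -LmodE; first by congr Lmod; rewrite /m; ring.
rewrite mulrNN; apply: leq_trans (size_polyD _ _) _.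
by rewrite geq_max !size_mul_leq_add.
Qed.

Let Lmod_m_sqr_ge0 w : 0 <= Lmod (m * (w * w)).
Proof.
have [sy1w sy2w] := size_syz (size_modG w).
rewrite Lmod_sqr_mod Lmod_m_sqr ?size_modG //.
by apply: L_syz_ge0; rewrite ?size_polyN ?syzygy.
Qed.

Let Lmod_m_sqr_eq0 w : Lmod (m * (w * w)) = 0 -> forall x, Lmod (w * x) = 0.
Proof.
move=> hw x; rewrite Lmod_mulr Lmod_mull.
have [sy1w sy2w] := size_syz (size_modG w).
move: hw; rewrite Lmod_sqr_mod Lmod_m_sqr ?size_modG // => hw.
have sw : (size (w %% G)%R <= d.+1)%N by apply: leq_trans (size_modG w) _; lia.
have sx : (size (x %% G)%R <= d.+1)%N by apply: leq_trans (size_modG x) _; lia.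
rewrite LmodE ?size_mul_leq_add //.
have {}sx : (size (x %% G)%R <= (d + e).+1)%N by apply: leq_trans sx _; lia.
have [a1 [a2 [sa1 sa2 ->]]] := coprimep_span y_coprime size_y1 size_y2 e_le_d sx.
have sNa1 : (size (- a1) <= d.+1)%N by rewrite size_polyN.
have sNy1w : (size (- (y1 * (w %% G))) <= d.+1)%N by rewrite size_polyN.
by rewrite -(L_syz_radical sy2w sNy1w (syzygy _) hw sa2 sNa1); congr L; ring.
Qed.

Let gram f : 'M[R]_k := \matrix_(i, j) Lmod (f * 'X^i * 'X^j).

Let gram_sym f : (gram f)^T = gram f.
Proof. by apply/matrixP => i j; rewrite !mxE mulrAC. Qed.

Let row_gram f (c : 'rV_k) j : (c *m gram f) 0 j = Lmod (f * rVpoly c * 'X^j).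
Proof.
rewrite mxE rVpoly_sum mulr_sumr mulr_suml Lmod_sum; apply: eq_bigr => i _.
by rewrite mxE -Lmod_scale -scalerAr -scalerAl.
Qed.

Let Lmod_mul_expand y x :
  Lmod (y * x) = \sum_(j < k) poly_rV (x %% G) 0 j * Lmod (y * 'X^j).
Proof.
rewrite Lmod_mulr -{1}(poly_rV_K (size_modG x)) rVpoly_sum mulr_sumr Lmod_sum.
by apply: eq_bigr => j _; rewrite -scalerAr Lmod_scale.
Qed.

Let gram_ker (c : 'rV_k) : c *m gram m = 0 -> c *m gram 1 = 0.
Proof.
move=> hc; have hw (j : 'I_k) : Lmod (m * rVpoly c * 'X^j) = 0 by rewrite -row_gram hc mxE.
have hww : Lmod (m * (rVpoly c * rVpoly c)) = 0.
  by rewrite mulrA Lmod_mul_expand big1 // => j _; rewrite hw mulr0.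
by apply/rowP => j; rewrite row_gram mxE mul1r (Lmod_m_sqr_eq0 hww).
Qed.

Let Lmod_represent (g : {poly R}) : exists w, forall x, Lmod (g * x) = Lmod (m * w * x).
Proof.
have [c hc] := symmx_ker_sub_range (gram_sym m) (gram_sym 1) gram_ker (poly_rV (g %% G)).
exists (rVpoly c) => x; rewrite Lmod_mul_expand [RHS]Lmod_mul_expand.
apply: eq_bigr => j _; congr (_ * _).
by rewrite [LHS]Lmod_mull -[g %% G]mul1r -(poly_rV_K (size_modG g)) -row_gram hc row_gram.
Qed.

Lemma functional_sqr_ge0_coprime (g : {poly R}) : (size g <= d.+1)%N -> 0 <= L (g * g).
Proof.
move=> sg; have [w hw] := Lmod_represent g.
rewrite -LmodE; last by apply: leq_trans (size_mul_leq_add sg sg) _; lia.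
rewrite hw mulrC hw.
have -> : m * w * (m * w) = m * ((y1 * w) * (y1 * w)) + m * ((y2 * w) * (y2 * w)).
  by rewrite /m; ring.
by rewrite Lmod_add addr_ge0 ?Lmod_m_sqr_ge0.
Qed.

End CommonFactor.

Lemma poly_functional_sqr_ge0 (g : {poly R}) : (size g <= d.+1)%N -> 0 <= L (g * g).
Proof.
have u1_neq0 : u1 != 0 by rewrite -size_poly_eq0 size_u1.
pose G := gcdp u1 u2.
have G_neq0 : G != 0 by rewrite gcdp_eq0 negb_and u1_neq0.
have u1E : u1 = u1 %/ G * G by rewrite divpK // dvdp_gcdl.
have u2E : u2 = u2 %/ G * G by rewrite divpK // dvdp_gcdr.
have y1_neq0 : u1 %/ G != 0 by apply: contraNneq u1_neq0 => y0; rewrite u1E y0 mul0r.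
have size_G : size G = (size G).-1.+1 by rewrite prednK // size_poly_gt0.
have size_y1 : size (u1 %/ G) = (size (u1 %/ G)).-1.+1 by rewrite prednK // size_poly_gt0.
apply: (functional_sqr_ge0_coprime _ size_y1 _ size_G u1E u2E).
  by rewrite coprimep_div_gcd // u1_neq0.
have [->|y2_neq0] := eqVneq (u2 %/ G) 0; first by rewrite size_poly0.
move: size_u1 size_u2; rewrite {1}u1E {1}u2E !size_mul //.
by move: (size (u1 %/ G)) (size (u2 %/ G)) (size G) => a b c; lia.
Qed.

End FunctionalSqrGe0.

Definition dmonomial (R : realType) (t : R) (n j : nat) : {poly R} :=
  'X^j * (t *: 'X + 1) ^+ (n - j).

(* The form c evaluated at (x1, x2) = ('X, t 'X + 1). *)
Definition dehomog (R : realType) (t : R) (n : nat) (c : bform R n) : {poly R} :=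
  \sum_(j < n.+1) c 0 j *: dmonomial t n j.

Section Dehomogenization.
Variables (R : realType) (t : R).

Lemma coef_dmonomial n j i :
  (dmonomial t n j)`_i = if (i < j)%N then 0 else t ^+ (i - j) *+ 'C(n - j, i - j).
Proof.
rewrite /dmonomial coefXnM exprD1n coef_sum; case: ltnP => // ji.
under eq_bigr do rewrite exprZn scalerMnl coefZ coefXn.
case: (ltnP (i - j) (n - j).+1) => [small|large].
  by rewrite (bigD1 (Ordinal small)) //= eqxx mulr1 big1 ?addr0 // => k;
    rewrite -val_eqE eq_sym => /negPf /= ->; rewrite mulr0.
rewrite bin_small // big1 ?mulr0n // => k _.
by rewrite eqn_leq (leqNgt _ k) (leq_trans (ltn_ord k)) ?andbF ?mulr0.
Qed.

Lemma size_dmonomial n j : (j <= n)%N -> (size (dmonomial t n j) <= n.+1)%N.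
Proof.
move=> jn; apply/leq_sizeP => i ni; rewrite coef_dmonomial.
by case: ltnP => // ji; rewrite bin_small ?mul0rn //; lia.
Qed.

Lemma dmonomialM n m i j : (i <= n)%N -> (j <= m)%N ->
  dmonomial t n i * dmonomial t m j = dmonomial t (n + m) (i + j).
Proof.
move=> i_n j_m; rewrite /dmonomial exprD.
have -> : (n + m - (i + j) = (n - i) + (m - j))%N by lia.
by rewrite exprD; ring.
Qed.

Definition dehomog_mx n : 'M[R]_(n.+1) := \matrix_(j, i) (dmonomial t n j)`_i.

Lemma dehomog_rV n (c : bform R n) : dehomog t c = rVpoly (c *m dehomog_mx n).
Proof.
apply/polyP => i; rewrite coef_rVpoly /dehomog coef_sum.
case: insubP => [i' _ <-|ni].
  by rewrite !mxE; apply: eq_bigr => j _; rewrite coefZ mxE.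
rewrite big1 // => j _; rewrite coefZ nth_default ?mulr0 //.
by apply: leq_trans (size_dmonomial (ltnSE (ltn_ord j))) _; rewrite leqNgt.
Qed.

Lemma dehomog_mx_unit n : dehomog_mx n \in unitmx.
Proof.
rewrite unitmxE -det_tr det_trig.
  by rewrite big1 ?unitr1 // => i _; rewrite !mxE coef_dmonomial ltnn subnn expr0 bin0.
by apply/is_trig_mxP => i j ij; rewrite !mxE coef_dmonomial ij.
Qed.

Definition homog n (p : {poly R}) : bform R n := poly_rV p *m invmx (dehomog_mx n).

Lemma dehomogK n : cancel (@dehomog R t n) (homog n).
Proof. by move=> c; rewrite /homog dehomog_rV rVpolyK mulmxK // dehomog_mx_unit. Qed.

Lemma homogK n (p : {poly R}) : (size p <= n.+1)%N -> dehomog t (homog n p) = p.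
Proof. by move=> sp; rewrite dehomog_rV mulmxKV ?dehomog_mx_unit // poly_rV_K. Qed.

Lemma size_dehomog n (c : bform R n) : (size (dehomog t c) <= n.+1)%N.
Proof. by rewrite dehomog_rV size_poly. Qed.

Lemma dehomog_inj n : injective (@dehomog R t n).
Proof. exact: can_inj (@dehomogK n). Qed.

Lemma dehomogD n (c c' : bform R n) : dehomog t (c + c') = dehomog t c + dehomog t c'.
Proof. by rewrite !dehomog_rV mulmxDl linearD. Qed.

Lemma dehomogZ n a (c : bform R n) : dehomog t (a *: c) = a *: dehomog t c.
Proof. by rewrite !dehomog_rV -scalemxAl linearZ. Qed.

Lemma dehomog0 n : dehomog t (0 : bform R n) = 0.
Proof. by rewrite -(scale0r 0) dehomogZ scale0r. Qed.

Lemma dehomog_bfmul n m (u : bform R n) (v : bform R m) :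
  dehomog t (bfmul u v) = dehomog t u * dehomog t v.
Proof.
rewrite /dehomog /bfmul mulr_suml.
under eq_bigr => k _ do rewrite mxE scaler_suml.
rewrite exchange_big /=; apply: eq_bigr => i _.
rewrite mulr_sumr; under eq_bigr => k _ do rewrite scaler_suml big_mkcond /=.
rewrite exchange_big /=; apply: eq_bigr => j _.
have ij_lt : (i + j < (n + m).+1)%N by have := ltn_ord i; have := ltn_ord j; lia.
rewrite (bigD1 (Ordinal ij_lt)) //= eqxx big1 ?addr0.
  by rewrite -scalerAl -scalerAr scalerA dmonomialM // -ltnS.
by move=> k; rewrite -val_eqE eq_sym /= => /negPf ->.
Qed.

Lemma coef_dehomog_top n (c : bform R n) :
  (dehomog t c)`_n = \sum_(j < n.+1) c 0 j * t ^+ (n - j).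
Proof.
rewrite /dehomog coef_sum; apply: eq_bigr => j _.
by rewrite coefZ coef_dmonomial ltnNge -ltnS ltn_ord binn.
Qed.

End Dehomogenization.

Lemma dehomog_full_size (R : realType) n (u : bform R n) :
  u != 0 -> exists t : R, size (dehomog t u) = n.+1.
Proof.
move=> u_neq0; pose Q : {poly R} := \sum_(j < n.+1) u 0 j *: 'X^(n - j).
have Q_neq0 : Q != 0.
  apply: contra_neq u_neq0 => Q0; apply/rowP => j; rewrite mxE.
  have := congr1 (fun q : {poly R} => q`_(n - j)) Q0.
  rewrite coef0 /Q coef_sum (bigD1 j) //= coefZ coefXn eqxx mulr1 big1 ?addr0 //.
  move=> i ij; rewrite coefZ coefXn; case: eqP => [eq_ij|]; last by rewrite mulr0.
  by move: ij; rewrite -val_eqE /=; have := ltn_ord i; have := ltn_ord j; lia.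
have [t Qt] := poly_nonroot Q_neq0.
exists t; apply/anti_leq; rewrite size_dehomog /=.
rewrite ltnNge; apply: contra Qt => small.
have := nth_default 0 small; rewrite coef_dehomog_top => top0.
rewrite /root /Q horner_sum -[X in _ == X]top0.
by apply/eqP/eq_bigr => j _; rewrite hornerZ hornerXn.
Qed.

Definition bfdot (R : realType) (d : nat) (u1 u2 v1 v2 : bform R d) : bform R (d + d) :=
  bfmul u1 v1 + bfmul u2 v2.

Definition bf_critical (R : realType) (d : nat) (L : bform R (d + d) -> R)
    (u1 u2 : bform R d) : Prop :=
  [/\ forall z1 z2, L (bfdot u1 u2 z1 z2) = 0,
      forall v1 v2, bfdot u1 u2 v1 v2 = 0 -> 0 <= L (bfdot v1 v2 v1 v2)
    & forall v1 v2, bfdot u1 u2 v1 v2 = 0 -> L (bfdot v1 v2 v1 v2) = 0 ->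
        forall z1 z2, L (bfdot v1 v2 z1 z2) = 0].

Lemma dehomog_bfdot (R : realType) (t : R) d (u1 u2 v1 v2 : bform R d) :
  dehomog t (bfdot u1 u2 v1 v2) = dehomog t u1 * dehomog t v1 + dehomog t u2 * dehomog t v2.
Proof. by rewrite dehomogD !dehomog_bfmul. Qed.

Lemma bfdotC (R : realType) d (u1 u2 v1 v2 : bform R d) :
  bfdot u2 u1 v2 v1 = bfdot u1 u2 v1 v2.
Proof. exact: addrC. Qed.

Lemma bf_criticalC (R : realType) d L (u1 u2 : bform R d) :
  bf_critical L u1 u2 -> bf_critical L u2 u1.
Proof.
case=> ideal syz_ge0 syz_rad; split=> [z1 z2|v1 v2|v1 v2].
- by rewrite bfdotC.
- by rewrite [bfdot u2 _ _ _]bfdotC [bfdot v1 _ _ _]bfdotC => /syz_ge0.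
- rewrite [bfdot u2 _ _ _]bfdotC [bfdot v1 _ _ _]bfdotC => syz0 B0 z1 z2.
  by rewrite bfdotC; apply: syz_rad.
Qed.

Lemma bfmul0l (R : realType) n m (v : bform R m) : bfmul (0 : bform R n) v = 0.
Proof. by apply: (@dehomog_inj _ 0); rewrite dehomog_bfmul !dehomog0 mul0r. Qed.

Section BformFunctional.
Variables (R : realType) (d : nat) (L : bform R (d + d) -> R).
Hypotheses (L_add : {morph L : x y / x + y}) (L_scale : forall c x, L (c *: x) = c * L x).

Lemma bform_functional_sqr_ge0_nz (u1 u2 : bform R d) :
  bf_critical L u1 u2 -> u1 != 0 -> forall g, 0 <= L (bfmul g g).
Proof.
case=> ideal syz_ge0 syz_rad u1_neq0 g.
have [t size_u1] := dehomog_full_size u1_neq0.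
pose Lp (f : {poly R}) := L (homog t (d + d) f).
have Lp_dehomog c : Lp (dehomog t c) = L c by rewrite /Lp dehomogK.
have dehomogP (v : {poly R}) : (size v <= d.+1)%N -> exists c : bform R d, v = dehomog t c.
  by move=> sv; exists (homog t d v); rewrite homogK.
have dehomog_eq0 (c : bform R (d + d)) : dehomog t c = 0 -> c = 0.
  by rewrite -(dehomog0 t (d + d)) => /dehomog_inj.
rewrite -Lp_dehomog dehomog_bfmul.
apply: (@poly_functional_sqr_ge0 R d (dehomog t u1) (dehomog t u2) Lp).
- by move=> x y; rewrite /Lp /homog linearD mulmxDl L_add.
- by move=> c x; rewrite /Lp /homog linearZ -scalemxAl L_scale.
- exact: size_u1.
- exact: size_dehomog.
- move=> z1 z2 /dehomogP[c1 ->] /dehomogP[c2 ->].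
  by rewrite -dehomog_bfdot Lp_dehomog.
- move=> v1 v2 /dehomogP[c1 ->] /dehomogP[c2 ->].
  by rewrite -!dehomog_bfdot Lp_dehomog => /dehomog_eq0/syz_ge0.
- move=> v1 v2 /dehomogP[c1 ->] /dehomogP[c2 ->].
  rewrite -!dehomog_bfdot !Lp_dehomog => /dehomog_eq0 syz0 B0 z1 z2.
  move=> /dehomogP[e1 ->] /dehomogP[e2 ->].
  by rewrite -dehomog_bfdot Lp_dehomog syz_rad.
- exact: size_dehomog.
Qed.

Lemma bform_functional_sqr_ge0 (u1 u2 : bform R d) :
  bf_critical L u1 u2 -> forall g, 0 <= L (bfmul g g).
Proof.
move=> crit g; have [u1_0|u1_neq0] := eqVneq u1 0; last first.
  exact: bform_functional_sqr_ge0_nz crit u1_neq0 g.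
have [u2_0|u2_neq0] := eqVneq u2 0.
  case: crit => _ syz_ge0 _; have := syz_ge0 g 0.
  by rewrite /bfdot u1_0 u2_0 !bfmul0l !addr0; apply.
exact: bform_functional_sqr_ge0_nz (bf_criticalC crit) u2_neq0 g.
Qed.

End BformFunctional.

Lemma quadratic_ge0_linear_coef0 (R : realFieldType) (b c : R) :
  (forall e, 0 <= e * b + e ^+ 2 * c) -> b = 0.
Proof.
move=> ge0; pose D := `|c| + 1.
have D_gt0 : 0 < D by rewrite ltr_wpDl.
have cD_lt0 : c - D < 0 by rewrite subr_lt0 (le_lt_trans (ler_norm c)) ?ltrDl.
have := ge0 (- b / D).
have -> : - b / D * b + (- b / D) ^+ 2 * c = (b / D) ^+ 2 * (c - D).
  by field; rewrite gt_eqF.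
rewrite nmulr_lge0 // => sqr_le0.
have /eqP : (b / D) ^+ 2 = 0 by apply/eqP; rewrite eq_le sqr_le0 sqr_ge0.
by rewrite sqrf_eq0 mulf_eq0 invr_eq0 (gt_eqF D_gt0) orbF => /eqP.
Qed.

Lemma derive_quartic_at0 (R : realType) (f : R -> R) (c0 c1 c2 c3 c4 : R) :
  (forall t, f t = c0 + c1 * t + c2 * t ^+ 2 + c3 * t ^+ 3 + c4 * t ^+ 4) ->
  derive1 f 0 = c1 /\ derive1n 2 f 0 = c2 *+ 2.
Proof.
move=> fE; pose P : {poly R} := c0%:P + c1 *: 'X + c2 *: 'X^2 + c3 *: 'X^3 + c4 *: 'X^4.
have -> : f = horner P by apply/funext => t; rewrite fE /P !hornerE.
have coefP i : P`_i = [:: c0; c1; c2; c3; c4]`_i.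
  rewrite /P !coefD !coefZ !coefXn coefX coefC.
  by case: i => [|[|[|[|[|i]]]]]; rewrite /= ?nth_nil; ring.
rewrite /derive1n /= -!derive.derivE !horner_coef0 !coef_deriv !coefP /=.
by split; ring.
Qed.

Section InnerProduct.
Variables (R : realType) (V : lmodType R) (ip : V -> V -> R).
Hypothesis ip_inner : is_inner_product ip.

Let ipC x y : ip x y = ip y x. Proof. by case: ip_inner. Qed.

Lemma ip0l z : ip 0 z = 0.
Proof.
case: ip_inner => _ lin _.
by have := lin 1 0 0 z; rewrite scaler0 add0r mul1r => h; lra.
Qed.

Lemma ipDl x y z : ip (x + y) z = ip x z + ip y z.
Proof. by case: ip_inner => _ lin _; have := lin 1 x y z; rewrite scale1r mul1r. Qed.

Lemma ipZl a x z : ip (a *: x) z = a * ip x z.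
Proof. by case: ip_inner => _ lin _; have := lin a x 0 z; rewrite addr0 ip0l addr0. Qed.

Lemma ipNl x z : ip (- x) z = - ip x z.
Proof. by rewrite -scaleN1r ipZl mulN1r. Qed.

Lemma ipDr x y z : ip z (x + y) = ip z x + ip z y.
Proof. by rewrite ipC ipDl ![ip _ z]ipC. Qed.

Lemma ipZr a x z : ip z (a *: x) = a * ip z x.
Proof. by rewrite ipC ipZl ipC. Qed.

Lemma ip_suml I (r : seq I) (F : I -> V) z :
  ip (\sum_(i <- r) F i) z = \sum_(i <- r) ip (F i) z.
Proof. exact: (big_morph (ip^~ z) (fun x y => ipDl x y z) (ip0l z)). Qed.

Lemma ip_ge0 x : 0 <= ip x x.
Proof.
case: ip_inner => _ _ pos; have [->|/pos/ltW //] := eqVneq x 0.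
by rewrite ip0l.
Qed.

Lemma ipnorm_sqr x : ipnorm ip x ^+ 2 = ip x x.
Proof. by rewrite sqr_sqrtr ?ip_ge0. Qed.

Lemma ip_quadratic_curve (r a b : V) (t : R) :
  ip (r + t *: a + t ^+ 2 *: b) (r + t *: a + t ^+ 2 *: b) =
  ip r r + 2 * ip a r * t + (ip a a + 2 * ip b r) * t ^+ 2
  + 2 * ip b a * t ^+ 3 + ip b b * t ^+ 4.
Proof. by rewrite !(ipDl, ipZl, ipDr, ipZr) (ipC r a) (ipC r b) (ipC a b); ring. Qed.

Lemma ipnorm_sub_le (s p q : V) :
  0 <= ip (q - s) (s - p) -> ipnorm ip (s - p) ^+ 2 <= ipnorm ip (q - p) ^+ 2.
Proof.
move=> obtuse; have -> : q - p = (q - s) + (s - p) by rewrite addrA subrK.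
rewrite !ipnorm_sqr; move: (q - s) (s - p) obtuse => x y xy_ge0.
by rewrite ipDl !ipDr (ipC y x); have := ip_ge0 x; lra.
Qed.

End InnerProduct.

Lemma bfdotDr (R : realType) d (u1 u2 v1 v2 z1 z2 : bform R d) (e : R) :
  bfdot u1 u2 (v1 + e *: z1) (v2 + e *: z2) = bfdot u1 u2 v1 v2 + e *: bfdot u1 u2 z1 z2.
Proof.
apply: (@dehomog_inj _ 0).
by rewrite !(dehomogD, dehomogZ, dehomog_bfdot) -!mul_polyC; ring.
Qed.

Lemma bfdot_line (R : realType) d (u1 u2 v1 v2 : bform R d) (t : R) :
  bfdot (u1 + t *: v1) (u2 + t *: v2) (u1 + t *: v1) (u2 + t *: v2) =
  bfdot u1 u2 u1 u2 + t *: (2 *: bfdot u1 u2 v1 v2) + t ^+ 2 *: bfdot v1 v2 v1 v2.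
Proof.
apply: (@dehomog_inj _ 0).
by rewrite !(dehomogD, dehomogZ, dehomog_bfdot) -!mul_polyC polyC_exp; ring.
Qed.

Section Residual.
Variables (R : realType) (d : nat) (ip : bform R (d + d) -> bform R (d + d) -> R).
Hypothesis ip_inner : is_inner_product ip.
Variables (p : bform R (d + d)) (u1 u2 : bform R d).

Let r := bfdot u1 u2 u1 u2 - p.

Lemma f_p_line_derive v1 v2 :
  let f t := f_p ip p (u1 + t *: v1) (u2 + t *: v2) in
  derive1 f 0 = 4 * ip (bfdot u1 u2 v1 v2) r /\
  derive1n 2 f 0 = (4 * ip (bfdot u1 u2 v1 v2) (bfdot u1 u2 v1 v2)
                    + 2 * ip (bfdot v1 v2 v1 v2) r) *+ 2.
Proof.
set S := bfdot u1 u2 v1 v2; set B := bfdot v1 v2 v1 v2 => f.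
have fE t : f t = ipnorm ip (r + t *: (2 *: S) + t ^+ 2 *: B) ^+ 2.
  rewrite /f /f_p; congr (ipnorm ip _ ^+ 2).
  change (bfdot (u1 + t *: v1) (u2 + t *: v2) (u1 + t *: v1) (u2 + t *: v2) - p =
    r + t *: (2 *: S) + t ^+ 2 *: B).
  by rewrite bfdot_line addrAC (addrAC (bfdot u1 u2 u1 u2)).
have := derive_quartic_at0 (fun t => etrans (fE t) (etrans (ipnorm_sqr ip_inner _)
  (ip_quadratic_curve ip_inner r (2 *: S) B t))).
by rewrite !(ipZl ip_inner, ipZr ip_inner) => -[-> ->]; split; ring.
Qed.

Lemma residual_orth :
  (forall v1 v2 : bform R d,
      derive1 (fun t : R => f_p ip p (u1 + t *: v1) (u2 + t *: v2)) 0 = 0) ->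
  forall v1 v2, ip (bfdot u1 u2 v1 v2) r = 0.
Proof.
move=> grad v1 v2; have [d1 _] := f_p_line_derive v1 v2.
by move: (grad v1 v2); rewrite d1 => h; lra.
Qed.

Lemma residual_hessian_ge0 :
  (forall v1 v2 : bform R d,
      0 <= derive1n 2 (fun t : R => f_p ip p (u1 + t *: v1) (u2 + t *: v2)) 0) ->
  forall v1 v2, 0 <= 2 * ip (bfdot u1 u2 v1 v2) (bfdot u1 u2 v1 v2) + ip (bfdot v1 v2 v1 v2) r.
Proof.
move=> hess v1 v2; have [_ d2] := f_p_line_derive v1 v2.
by move: (hess v1 v2); rewrite d2 mulr2n => h; lra.
Qed.

Lemma residual_critical :
  (forall v1 v2, ip (bfdot u1 u2 v1 v2) r = 0) ->
  (forall v1 v2, 0 <= 2 * ip (bfdot u1 u2 v1 v2) (bfdot u1 u2 v1 v2) + ip (bfdot v1 v2 v1 v2) r) ->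
  bf_critical (ip^~ r) u1 u2.
Proof.
move=> orth hess; split=> [//|v1 v2 syz0|v1 v2 syz0 B0 z1 z2].
  by have := hess v1 v2; rewrite syz0 ip0l // mulr0 add0r.
suff : 2 * ip (bfdot v1 v2 z1 z2) r = 0 by lra.
pose c := 2 * ip (bfdot u1 u2 z1 z2) (bfdot u1 u2 z1 z2) + ip (bfdot z1 z2 z1 z2) r.
apply: (@quadratic_ge0_linear_coef0 _ _ c) => e.
have := hess (v1 + e *: z1) (v2 + e *: z2).
rewrite bfdotDr syz0 add0r bfdot_line /c; move: B0.
(* Generalize first: [bfdot] unfolds to a sum, which [ipDl] would split. *)
move: (bfdot v1 v2 v1 v2) (bfdot v1 v2 z1 z2) (bfdot u1 u2 z1 z2) (bfdot z1 z2 z1 z2).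
move=> Bv W Sz Bz B0; rewrite !(ipDl ip_inner, ipZl ip_inner, ipZr ip_inner) B0 => h.
lra.
Qed.

End Residual.

Theorem corollary6p1 (R : realType) (d : nat)
  (ip : bform R (d + d) -> bform R (d + d) -> R)
  (Hip : is_inner_product ip)
  (p : bform R (d + d)) (u1 u2 : bform R d)
  (Hgrad : forall v1 v2 : bform R d,
      derive1 (fun t : R => f_p ip p (u1 + t *: v1) (u2 + t *: v2)) 0 = 0)
  (Hhess : forall v1 v2 : bform R d,
      0 <= derive1n 2 (fun t : R => f_p ip p (u1 + t *: v1) (u2 + t *: v2)) 0) :
  forall q : bform R (d + d), is_sos q ->
    f_p ip p u1 u2 <= ipnorm ip (q - p) ^+ 2.
Proof.
move=> q [m [g ->]].
have orth := residual_orth Hip Hgrad.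
have crit := residual_critical Hip orth (residual_hessian_ge0 Hip Hhess).
have sqr_ge0 :=
  bform_functional_sqr_ge0 (fun x y => ipDl Hip x y _) (fun c x => ipZl Hip c x _) crit.
apply: ipnorm_sub_le => //.
rewrite ipDl // ipNl // [X in _ - X]orth subr0 ip_suml //.
by apply: sumr_ge0 => i _; apply: sqr_ge0.
Qed.
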